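(* Let $V$ and $Q$ be real Hilbert spaces, $f \in V'$, $g \in Q'$, and let $a : V \times V \to \mathbb{R}$ and $b : V \times Q \to \mathbb{R}$ be bilinear forms with $|a(u,v)| \leq \|a\| \|u\|_V \|v\|_V$ and $|b(v,q)| \leq \|b\| \|v\|_V \|q\|_Q$ for all $u,v \in V$, $q \in Q$. Let $B : V \to Q'$ be defined by $\langle Bv, q\rangle_{Q' \times Q} = b(v,q)$ and let $K := \{ v \in V : b(v,q) = 0 \text{ for all } q \in Q\}$. Assume $\operatorname{Range} B = Q'$, and let $\beta > 0$ be a constant with $$\beta \leq \inf_{q \in Q\setminus\{0\}} \sup_{v \in V \setminus\{0\}} \frac{b(v,q)}{\|v\|_V \|q\|_Q}.$$ Assume moreover that $a$ is symmetric, $a(u,v) = a(v,u)$ for all $u,v \in V$, and coercive: there is $\alpha > 0$ with $a(u,u) \geq \alpha\|u\|_V^2$ for all $u \in V$; and let $\alpha_0 \geq \alpha$ be a constant with $a(u,u) \geq \alpha_0 \|u\|_V^2$ for all $u \in K$. Let $(u,p) \in V \times Q$ be the solution of $$a(u,v) + b(v,p) = \langle f, v\rangle_{V' \times V} \ \text{for all } v \in V, \qquad b(u,q) = \langle g, q \rangle_{Q' \times Q} \ \text{for all } q \in Q.$$ Then $$\|u\|_V \leq \frac{1}{\alpha_0}\|f\|_{K'} + \frac{1}{\beta}\Big(\frac{\|a\|}{\alpha}\Big)^{1/2}\|g\|_{Q'},$$ $$\|p\|_Q \leq \frac{1}{\beta}\|f \circ \Pi_{K_a^\perp}\|_{V'}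 + \frac{\|a\|}{\beta^2}\|g\|_{Q'} \leq \frac{1}{\beta}\Big(\frac{\|a\|}{\alpha}\Big)^{1/2}\|f\|_{(K_a^\perp)'} + \frac{\|a\|}{\beta^2}\|g\|_{Q'}.$$
   Context: For $f \in V'$, $\|f\|_{V'} := \sup_{v \in V\setminus\{0\}} |\langle f, v\rangle_{V'\times V}| / \|v\|_V$. For a closed subspace $U \subset V$, $\|f\|_{U'} := \sup_{v \in U \setminus\{0\}} |\langle f, v\rangle_{V' \times V}| / \|v\|_V$ (a semi norm on $V'$ in general). Since $a$ is a scalar product on $V$, define $K_a^\perp := \{ v \in V : a(v, w) = 0 \text{ for all } w \in K\}$; $\Pi_K : V \to K$ is the $a$-orthogonal projection onto $K$ (i.e. $a(\Pi_K v - v, w) = 0$ for all $v \in V$, $w \in K$), and $\Pi_{K_a^\perp} := I - \Pi_K$. $f \circ \Pi_{K_a^\perp} \in V'$ is the functional $v \mapsto \langle f, \Pi_{K_a^\perp} v\rangle_{V' \times V}$. $\|a\|$ denotes a continuity constant of $a$ as in the claim. *)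

From HB Require Import structures.
From mathcomp Require Import all_boot all_order all_algebra.
From mathcomp Require Import all_classical all_reals all_analysis.
Set Implicit Arguments. Unset Strict Implicit. Unset Printing Implicit Defensive.
Import Order.TTheory GRing.Theory Num.Theory.
Import numFieldNormedType.Exports.
Local Open Scope classical_set_scope.
Local Open Scope ring_scope.

Definition is_hilbert (R : realType) (V : completeNormedModType R) : Prop :=
  exists ip : V -> V -> R,
    (forall x y, ip x y = ip y x) /\
    (forall (r : R) x y z, ip (r *: x + y) z = r * ip x z + ip y z) /\
    (forall x, ip x x = `|x| ^+ 2).

Definition is_dual_elem (R : realType) (V : normedModType R) (f : V -> R) : Prop :=
  (forall (r : R) x y, f (r *: x + y) = r * f x + f y) /\ continuous f.

Definition is_bilinear (R : realType) (V W : normedModType R) (a : V -> W -> R) : Prop :=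
  (forall (r : R) x y z, a (r *: x + y) z = r * a x z + a y z) /\
  (forall (r : R) x y z, a z (r *: x + y) = r * a z x + a z y).

(* ||f||_{S'} := sup_{v in S \ {0}} |<f,v>| / ||v||  (the dual (semi)norm
   restricted to S; with S = setT this is ||f||_{V'}). *)
Definition dnorm (R : realType) (V : normedModType R) (S : set V) (f : V -> R) : R :=
  sup [set `|f v| / `|v| | v in S `&` [set v | v != 0]].

Definition kerB (R : realType) (V Q : normedModType R) (b : V -> Q -> R) : set V :=
  [set v | forall q, b v q = 0].

Definition a_perp (R : realType) (V : normedModType R) (a : V -> V -> R) (K : set V) : set V :=
  [set v | forall w, K w -> a v w = 0].

Definition is_a_proj (R : realType) (V : normedModType R) (a : V -> V -> R)
  (K : set V) (P : V -> V) : Prop :=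
  forall v, K (P v) /\ (forall w, K w -> a (P v - v) w = 0).

From HB Require Import structures.
From mathcomp Require Import all_boot all_order all_algebra.
From mathcomp Require Import all_classical all_reals all_analysis.
From mathcomp Require Import ring lra.
Set Implicit Arguments.
Unset Strict Implicit.
Unset Printing Implicit Defensive.
Import Order.TTheory GRing.Theory Num.Theory.
Import numFieldNormedType.Exports.
Local Open Scope classical_set_scope.
Local Open Scope ring_scope.

(* The symmetric coercive form [a] is an inner product on [V] equivalent to
   its norm.  Lax-Milgram, proved here by minimising the energy
   [x |-> c x x / 2 - phi x] (the filter of its sublevel sets is Cauchy by the
   parallelogram law), gives for each [q] the [a]-representative [riesz q] of
   [b (.) q].  By the inf-sup condition [(q, q') |-> a (riesz q) (riesz q')] is
   coercive on [Q] with constant [beta^2 / na], so Lax-Milgram on [Q] yields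
   [q0] with [a (riesz q0) (riesz .) = g]; then [riesz q0 = u - P u], both
   being [a]-orthogonal to [K] with image [g] under [B].  Hence
   [a (u - P u) (u - P u) = g q0], which the inf-sup condition turns into the
   bound on [u - P u], while testing the first equation with [P u] bounds [P u].
   For [p], [b v p = f (v - P v) - a (u - P u) v], and the inf-sup condition
   with Cauchy-Schwarz for [a] concludes; the last inequality is
   [|v - P v| <= sqrt (na / alpha) |v|]. *)

Section Linear.
Variables (R : realType) (V : normedModType R) (h : V -> R).
Hypothesis hl : forall (r : R) x y, h (r *: x + y) = r * h x + h y.

Lemma lin0 : h 0 = 0.
Proof. by have := hl 1 0 0; rewrite scale1r addr0 mul1r; lra. Qed.

Lemma linD x y : h (x + y) = h x + h y.
Proof. by rewrite -[x in LHS]scale1r hl mul1r. Qed.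

Lemma linZ r x : h (r *: x) = r * h x.
Proof. by rewrite -[_ *: _]addr0 hl lin0 addr0. Qed.

Lemma linB x y : h (x - y) = h x - h y.
Proof. by rewrite linD -scaleN1r linZ mulN1r. Qed.

End Linear.

Section Bilinear.
Variables (R : realType) (U W : normedModType R) (c : U -> W -> R).
Hypothesis hc : is_bilinear c.

Let hcl z : forall r x y, (c^~ z) (r *: x + y) = r * (c^~ z) x + (c^~ z) y.
Proof. by move=> r x y; case: hc. Qed.

Let hcr z : forall r x y, (c z) (r *: x + y) = r * (c z) x + (c z) y.
Proof. by move=> r x y; case: hc. Qed.

Lemma bilinDl x y z : c (x + y) z = c x z + c y z.
Proof. by rewrite (linD (hcl z)). Qed.

Lemma bilinZl r x z : c (r *: x) z = r * c x z.
Proof. by rewrite (linZ (hcl z)). Qed.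

Lemma bilinBl x y z : c (x - y) z = c x z - c y z.
Proof. by rewrite (linB (hcl z)). Qed.

Lemma bilinDr x y z : c z (x + y) = c z x + c z y.
Proof. by rewrite (linD (hcr z)). Qed.

Lemma bilinZr r x z : c z (r *: x) = r * c z x.
Proof. by rewrite (linZ (hcr z)). Qed.

Lemma bilinBr x y z : c z (x - y) = c z x - c z y.
Proof. by rewrite (linB (hcr z)). Qed.

End Bilinear.

Lemma discriminant_le (R : realFieldType) (a b c : R) : 0 <= c ->
  (forall t, 0 <= a + 2 * b * t + c * t ^+ 2) -> b ^+ 2 <= a * c.
Proof.
rewrite le_eqVlt => /orP[/eqP c0 | c_gt0] quad_ge0.
  have [-> | b_neq0] := eqVneq b 0; first by rewrite -c0 mulr0 expr0n.
  have := quad_ge0 (- (a + 1) / (2 * b)); rewrite -c0 mul0r addr0.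
  have -> : 2 * b * (- (a + 1) / (2 * b)) = - (a + 1) by field.
  lra.
have := quad_ge0 (- b / c); rewrite -(ler_pM2r c_gt0) mul0r.
have -> : (a + 2 * b * (- b / c) + c * (- b / c) ^+ 2) * c = a * c - b ^+ 2.
  by field; rewrite gt_eqF.
lra.
Qed.

Lemma ler_of_addr_small (R : realFieldType) (x y K : R) :
  (forall d, 0 < d -> d <= 1 -> x <= y + K * d) -> x <= y.
Proof.
move=> small_slack; apply/ler_addgt0Pr => e e_gt0.
have nK1 : 0 < `|K| + 1 by rewrite ltr_pwDr.
pose d := Num.min 1 (e / (`|K| + 1)).
have d_gt0 : 0 < d by rewrite lt_min ltr01 divr_gt0.
have d_le1 : d <= 1 by rewrite ge_min lexx.
have Kd_le : `|K| * d <= e.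
  have : d <= e / (`|K| + 1) by rewrite ge_min lexx orbT.
  rewrite ler_pdivlMr // => h; have := normr_ge0 K; nra.
have := small_slack d d_gt0 d_le1; have := ler_norm K; nra.
Qed.

Lemma ler_of_sqr (R : realDomainType) (x y : R) :
  0 <= y -> x ^+ 2 <= y ^+ 2 -> x <= y.
Proof. by move=> y_ge0 xy; have := ler_norm x; have := normr_ge0 x; nra. Qed.

Lemma ge0_ge_sup (R : realType) (S : set R) (k : R) :
  0 <= k -> ubound S k -> sup S <= k.
Proof.
move=> k_ge0 Sk; have [->|/set0P S_neq0] := eqVneq S set0; first by rewrite sup0.
exact: ge_sup.
Qed.

Lemma form_diag_le (R : realType) (X : normedModType R) (c : X -> X -> R) M :
  (forall x y, `|c x y| <= M * `|x| * `|y|) -> forall x, c x x <= M * `|x| ^+ 2.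
Proof.
by move=> c_bound x; rewrite expr2 mulrA; exact: le_trans (ler_norm _) (c_bound x x).
Qed.

Lemma coercive_le_bound (R : realType) (X : normedModType R) (c : X -> X -> R)
    (alpha M : R) (x : X) : (forall x, alpha * `|x| ^+ 2 <= c x x) ->
  (forall x y, `|c x y| <= M * `|x| * `|y|) -> x != 0 -> alpha <= M.
Proof.
move=> c_coercive c_bound x_neq0.
have x2_gt0 : 0 < `|x| ^+ 2 by rewrite exprn_gt0 // normr_gt0.
by rewrite -(ler_pM2r x2_gt0); exact: le_trans (c_coercive x) (form_diag_le c_bound x).
Qed.

Section CoerciveForm.
Variables (R : realType) (X : normedModType R) (c : X -> X -> R) (alpha : R).
Hypotheses (hc : is_bilinear c) (c_sym : forall x y, c x y = c y x).
Hypotheses (alpha_gt0 : 0 < alpha) (c_coercive : forall x, alpha * `|x| ^+ 2 <= c x x).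

Lemma form_ge0 x : 0 <= c x x.
Proof. by apply: le_trans (c_coercive x); rewrite mulr_ge0 ?sqr_ge0 ?ltW. Qed.

Lemma form_eq0 x : c x x = 0 -> x = 0.
Proof.
move=> cxx0; have := c_coercive x; rewrite cxx0 pmulr_rle0 // => nx_le0.
by apply/eqP; rewrite -normr_eq0 -sqrf_eq0 eq_le nx_le0 sqr_ge0.
Qed.

Lemma form_inj x y : (forall v, c x v = c y v) -> x = y.
Proof.
by move=> cxy; apply/subr0_eq/form_eq0; rewrite (bilinBl hc) cxy subrr.
Qed.

Lemma form_CauchySchwarz x y : c x y ^+ 2 <= c x x * c y y.
Proof.
apply: discriminant_le (form_ge0 y) _ => t; have := form_ge0 (x + t *: y).
by rewrite !(bilinDl hc, bilinDr hc, bilinZl hc, bilinZr hc) (c_sym y x) => h; lra.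
Qed.

Lemma perp_mem_eq0 (K : set X) y : K y -> a_perp c K y -> y = 0.
Proof. by move=> Ky /(_ y Ky); exact: form_eq0. Qed.

End CoerciveForm.

Section LaxMilgram.
Variables (R : realType) (X : completeNormedModType R) (c : X -> X -> R).
Variables (phi : X -> R) (alpha M C : R).
Hypotheses (hc : is_bilinear c) (c_sym : forall x y, c x y = c y x).
Hypotheses (alpha_gt0 : 0 < alpha) (c_coercive : forall x, alpha * `|x| ^+ 2 <= c x x).
Hypotheses (M_ge0 : 0 <= M) (c_bound : forall x y, `|c x y| <= M * `|x| * `|y|).
Hypotheses (phi_lin : forall r x y, phi (r *: x + y) = r * phi x + phi y).
Hypotheses (C_ge0 : 0 <= C) (phi_bound : forall x, `|phi x| <= C * `|x|).

Let E x := c x x / 2 - phi x.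

Let cE := (bilinBl hc, bilinBr hc, bilinDl hc, bilinDr hc, bilinZl hc, bilinZr hc).

Lemma energy_shift x t v :
  E (x + t *: v) = E x + t * (c x v - phi v) + t ^+ 2 * c v v / 2.
Proof. by rewrite /E !cE (linD phi_lin) (linZ phi_lin) (c_sym v x); field. Qed.

Lemma energy_midpoint x y :
  E x + E y - 2 * E (2^-1 *: (x + y)) = c (x - y) (x - y) / 4.
Proof.
by rewrite /E !cE (linZ phi_lin) (linD phi_lin) (c_sym y x); field.
Qed.

Lemma energy_lbound x : - (C ^+ 2 / (2 * alpha)) <= E x.
Proof.
rewrite lerNl ler_pdivlMr ?mulr_gt0 // /E.
have h1 : alpha * (alpha * `|x| ^+ 2) <= alpha * c x x by rewrite ler_pM2l.
have h2 : alpha * phi x <= alpha * (C * `|x|).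
  by rewrite ler_pM2l //; apply: le_trans (ler_norm _) (phi_bound x).
have := sqr_ge0 (C - alpha * `|x|); rewrite sqrrB; lra.
Qed.

Lemma energy_subr_le z x :
  E z - E x <= (M * (`|z| + `|x|) / 2 + C) * `|z - x|.
Proof.
have -> : E z - E x = c (z - x) (z + x) / 2 - phi (z - x).
  by rewrite /E !cE (linB phi_lin) (c_sym x z); field.
have cle : c (z - x) (z + x) <= M * `|z - x| * (`|z| + `|x|).
  apply: le_trans (ler_norm _) _; apply: le_trans (c_bound _ _) _.
  by rewrite ler_wpM2l ?mulr_ge0 // ler_normD.
have -> : (M * (`|z| + `|x|) / 2 + C) * `|z - x| =
          M * `|z - x| * (`|z| + `|x|) / 2 + C * `|z - x| by ring.
have := ler_norm (- phi (z - x)); rewrite normrN.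
have := phi_bound (z - x); lra.
Qed.

Lemma minimizer_euler z : (forall y, E z <= E y) -> forall v, c z v = phi v.
Proof.
move=> zmin v; apply/eqP; rewrite -subr_eq0 -sqrf_eq0 eq_le sqr_ge0 andbT.
have cvv_ge0 : 0 <= c v v / 2 by rewrite divr_ge0 // (form_ge0 alpha_gt0).
have quad t : 0 <= 0 + 2 * ((c z v - phi v) / 2) * t + c v v / 2 * t ^+ 2.
  by have := zmin (z + t *: v); rewrite energy_shift => h; lra.
have := discriminant_le cvv_ge0 quad.
by rewrite mul0r expr_div_n pmulr_lle0 // invr_gt0 exprn_gt0.
Qed.

Let m := inf (range E).

Lemma inf_energy_le y : m <= E y.
Proof.
have lbE : has_lbound (range E).
  by exists (- (C ^+ 2 / (2 * alpha))) => _ [x _ <-]; exact: energy_lbound.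
exact: ge_inf lbE _ (imageT E y).
Qed.

Lemma near_minimizers_dist x y :
  alpha * `|x - y| ^+ 2 <= 4 * (E x - m + (E y - m)).
Proof.
have := energy_midpoint x y; have := inf_energy_le (2^-1 *: (x + y)).
by have := c_coercive (x - y); lra.
Qed.

Lemma minimizing_limit : exists z, forall d, 0 < d ->
  exists x, E x < m + d /\ `|z - x| < d.
Proof.
have sublevel_ne r : m < r -> exists x, E x < r.
  by move=> /(inf_lt (ex_intro _ (E 0) (imageT E 0))) [_ [x _ <-]]; exists x.
pose F := filter_from [set r | m < r] (fun r => [set x | E x < r]).
have FF : ProperFilter F.
  apply: filter_from_proper => [|r /sublevel_ne//].
  apply: filter_from_filter => [|r s mr ms]; first by exists (m + 1); rewrite /= ltrDl.
  exists (Num.min r s); first by rewrite /= lt_min mr ms.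
  by move=> x /=; rewrite lt_min => /andP[].
have /cauchy_cvg Fz : cauchy F.
  apply: cauchy_exP => e e_gt0.
  have me : m < m + alpha * e ^+ 2 / 8 by rewrite ltrDl !mulr_gt0 ?exprn_gt0.
  have [x Ex] := sublevel_ne _ me.
  exists x, (m + alpha * e ^+ 2 / 8) => // y /= Ey.
  have dist2 : `|x - y| ^+ 2 < e ^+ 2.
    by rewrite -(ltr_pM2l alpha_gt0); have := near_minimizers_dist x y; lra.
  by rewrite -ball_normE /ball_ /=; move: dist2; have := normr_ge0 (x - y); nra.
exists (lim F) => d d_gt0.
have Fd : F [set x | E x < m + d] by exists (m + d); rewrite /= ?ltrDl.
have [x [/= Ex zx]] := filter_ex (filterI Fd (Fz _ (nbhsx_ballx (lim F) d d_gt0))).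
by exists x; move: zx; rewrite -ball_normE.
Qed.

Lemma energy_minimizer : exists z, forall y, E z <= E y.
Proof.
have [z z_lim] := minimizing_limit; exists z => y; apply: le_trans (inf_energy_le y).
apply: (ler_of_addr_small (K := M * (`|z| + 1) + C + 1)) => d d_gt0 d_le1.
have [x [Ex zx]] := z_lim d d_gt0.
have nx : `|x| <= `|z| + 1.
  have := ler_normB z (z - x); rewrite opprB addrC subrK; lra.
set A := M * (`|z| + `|x|) / 2 + C.
have A_ge0 : 0 <= A by rewrite addr_ge0 // divr_ge0 // mulr_ge0 // addr_ge0.
have A_le : A <= M * (`|z| + 1) + C.
  by rewrite lerD2r -mulrA ler_wpM2l // ler_pdivrMr //; have := normr_ge0 z; lra.
have : A * `|z - x| <= (M * (`|z| + 1) + C) * d.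
  exact: le_trans (ler_wpM2l A_ge0 (ltW zx)) (ler_wpM2r (ltW d_gt0) A_le).
have := energy_subr_le z x; rewrite -/A; lra.
Qed.

Theorem lax_milgram : exists z, forall v, c z v = phi v.
Proof. by have [z zmin] := energy_minimizer; exists z; exact: minimizer_euler. Qed.

End LaxMilgram.

Section DualNorm.
Variables (R : realType) (V : normedModType R).
Implicit Types (S : set V) (h : V -> R).

Let dnorm_ub S h C : (forall x, `|h x| <= C * `|x|) ->
  ubound [set `|h v| / `|v| | v in S `&` [set v | v != 0]] C.
Proof. by move=> h_bound _ [x [_ /= x_neq0] <-]; rewrite ler_pdivrMr ?normr_gt0. Qed.

Lemma normr_le_dnorm S h C v : (forall x, `|h x| <= C * `|x|) -> S v ->
  `|h v| <= dnorm S h * `|v|.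
Proof.
move=> h_bound Sv; have [->|v_neq0] := eqVneq v 0.
  by have := h_bound 0; rewrite normr0 !mulr0.
rewrite -ler_pdivrMr ?normr_gt0 //; apply: ub_le_sup; last by exists v.
by exists C; exact: dnorm_ub.
Qed.

Lemma dnorm_ge0 S h C : (forall x, `|h x| <= C * `|x|) -> 0 <= dnorm S h.
Proof.
move=> h_bound; rewrite /dnorm.
set D := [set _ | _ in _]; have [->|/set0P[y Dy]] := eqVneq D set0; first by rewrite sup0.
have Dub : has_ubound D by exists C; exact: dnorm_ub.
apply: le_trans (ub_le_sup Dub Dy); case: Dy => v _ <-; exact: divr_ge0.
Qed.

Lemma ge_dnorm S h k : 0 <= k ->
  (forall v, S v -> v != 0 -> `|h v| <= k * `|v|) -> dnorm S h <= k.
Proof.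
move=> k_ge0 hk; apply: ge0_ge_sup => // _ [v [Sv /= v_neq0] <-].
by rewrite ler_pdivrMr ?normr_gt0 // hk.
Qed.

Lemma dnorm_trivial S h : (forall v : V, v = 0) -> dnorm S h = 0.
Proof.
move=> V0; rewrite /dnorm -[RHS]sup0; congr sup.
by apply/seteqP; split=> // _ [v [_ /= v_neq0] _]; rewrite (V0 v) eqxx in v_neq0.
Qed.

End DualNorm.

Lemma infsup_le (R : realType) (V Q : normedModType R) (b : V -> Q -> R)
    (beta k : R) (q : Q) : q != 0 -> 0 <= k ->
  (forall v, v != 0 -> b v q <= k * `|v|) ->
  beta <= sup [set b v q / (`|v| * `|q|) | v in [set v : V | v != 0]] ->
  beta * `|q| <= k.
Proof.
move=> q_neq0 k_ge0 bk beta_le; have q_gt0 : 0 < `|q| by rewrite normr_gt0.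
rewrite -ler_pdivlMr //; apply: le_trans beta_le _; apply: ge0_ge_sup.
  by rewrite divr_ge0.
move=> _ [v /= v_neq0 <-]; rewrite ler_pdivrMr ?mulr_gt0 ?normr_gt0 //.
have -> : k / `|q| * (`|v| * `|q|) = k * `|v| by field; rewrite gt_eqF.
exact: bk.
Qed.

Lemma infsup_trivial (R : realType) (V Q : normedModType R) (b : V -> Q -> R)
    (beta : R) : 0 < beta -> (forall v : V, v = 0) ->
  (forall q : Q, q != 0 ->
     beta <= sup [set b v q / (`|v| * `|q|) | v in [set v : V | v != 0]]) ->
  forall q : Q, q = 0.
Proof.
move=> beta_gt0 V0 infsup q; apply/eqP/negPn/negP => /infsup.
have -> : [set b v q / (`|v| * `|q|) | v in [set v : V | v != 0]] = set0.
  by apply/seteqP; split=> // _ [v /= v_neq0 _]; rewrite (V0 v) eqxx in v_neq0.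
by rewrite sup0 leNgt beta_gt0.
Qed.

Section Projection.
Variables (R : realType) (V : normedModType R) (a : V -> V -> R).
Variables (K : set V) (P : V -> V) (alpha na : R).
Hypotheses (ha : is_bilinear a) (a_sym : forall x y, a x y = a y x).
Hypotheses (alpha_gt0 : 0 < alpha) (a_coercive : forall x, alpha * `|x| ^+ 2 <= a x x).
Hypotheses (na_ge0 : 0 <= na) (a_bound : forall x y, `|a x y| <= na * `|x| * `|y|).
Hypothesis hP : is_a_proj a K P.

Lemma proj_compl_perp v : a_perp a K (v - P v).
Proof.
move=> k Kk; have [_ /(_ k Kk)] := hP v.
by rewrite -opprB -scaleN1r (bilinZl ha) mulN1r => /eqP; rewrite oppr_eq0 => /eqP.
Qed.

Lemma proj_compl_form_le v : a (v - P v) (v - P v) <= a v v.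
Proof.
have [KPv _] := hP v; have vE : v = P v + (v - P v) by rewrite addrC subrK.
move: (v - P v) (proj_compl_perp v) vE => w w_perp ->.
rewrite (bilinDl ha) !(bilinDr ha) (a_sym (P v) w) (w_perp _ KPv).
by have := form_ge0 alpha_gt0 a_coercive (P v); lra.
Qed.

Lemma proj_compl_norm v : `|v - P v| <= Num.sqrt (na / alpha) * `|v|.
Proof.
apply: ler_of_sqr; first by rewrite mulr_ge0 ?sqrtr_ge0.
have ratio_ge0 : 0 <= na / alpha by rewrite divr_ge0 // ltW.
rewrite exprMn sqr_sqrtr // mulrAC ler_pdivlMr // mulrC.
have := a_coercive (v - P v); have := proj_compl_form_le v.
have := form_diag_le a_bound v; lra.
Qed.

End Projection.

Section MixedProblem.
Variables (R : realType) (V Q : completeNormedModType R).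
Variables (f : V -> R) (g : Q -> R) (a : V -> V -> R) (b : V -> Q -> R).
Variables (na nb alpha alpha0 beta : R) (u : V) (p : Q) (P : V -> V).
Hypotheses (f_lin : forall r x y, f (r *: x + y) = r * f x + f y)
           (g_lin : forall r x y, g (r *: x + y) = r * g x + g y).
Hypotheses (ha : is_bilinear a) (hb : is_bilinear b).
Hypotheses (a_bound : forall x y, `|a x y| <= na * `|x| * `|y|)
           (b_bound : forall v q, `|b v q| <= nb * `|v| * `|q|).
Hypotheses (beta_gt0 : 0 < beta)
  (infsup : forall q : Q, q != 0 ->
     beta <= sup [set b v q / (`|v| * `|q|) | v in [set v : V | v != 0]]).
Hypotheses (a_sym : forall x y, a x y = a y x) (alpha_gt0 : 0 < alpha)
           (a_coercive : forall x, alpha * `|x| ^+ 2 <= a x x).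
Hypotheses (alpha_le : alpha <= alpha0)
           (a_coercive_ker : forall x, kerB b x -> alpha0 * `|x| ^+ 2 <= a x x).
Hypotheses (eq_u : forall v, a u v + b v p = f v) (eq_p : forall q, b u q = g q).
Hypotheses (hP : is_a_proj a (kerB b) P) (na_gt0 : 0 < na).

Let b_lin q r x y : b (r *: x + y) q = r * b x q + b y q.
Proof. by case: hb. Qed.

Let b_bound_abs v q : `|b v q| <= `|nb| * `|v| * `|q|.
Proof.
apply: le_trans (b_bound v q) _; rewrite -!mulrA ler_wpM2r ?mulr_ge0 //.
exact: ler_norm.
Qed.

Lemma f_bound v : `|f v| <= (na * `|u| + `|nb| * `|p|) * `|v|.
Proof.
rewrite -eq_u mulrDl; apply: le_trans (ler_normD _ _) _.
by apply: lerD; [exact: a_bound | rewrite mulrAC; exact: b_bound_abs].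
Qed.

Lemma g_bound q : `|g q| <= `|nb| * `|u| * `|q|.
Proof. by rewrite -eq_p. Qed.

Lemma representative_norm z q : (forall v, a z v = b v q) ->
  alpha * `|z| <= `|nb| * `|q|.
Proof.
move=> z_rep; have [->|z_neq0] := eqVneq z 0; first by rewrite normr0 mulr0 mulr_ge0.
rewrite -(ler_pM2r (_ : 0 < `|z|)) ?normr_gt0 // -mulrA -expr2 mulrAC.
apply: le_trans (a_coercive z) _; rewrite z_rep.
exact: le_trans (ler_norm _) (b_bound_abs z q).
Qed.

Lemma representative_infsup z q : (forall v, a z v = b v q) ->
  beta ^+ 2 * `|q| ^+ 2 <= na * a z z.
Proof.
move=> z_rep; have zz_ge0 : 0 <= a z z := form_ge0 alpha_gt0 a_coercive z.
have nazz_ge0 : 0 <= na * a z z by rewrite mulr_ge0 // ltW.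
have [->|q_neq0] := eqVneq q 0; first by rewrite normr0 expr0n /= mulr0.
have k_ge0 : 0 <= Num.sqrt (na * a z z) := sqrtr_ge0 _.
have bq_ge0 : 0 <= beta * `|q| by rewrite mulr_ge0 // ltW.
rewrite -exprMn -(sqr_sqrtr nazz_ge0) ler_pXn2r ?nnegrE //.
apply: infsup_le q_neq0 k_ge0 _ (infsup q_neq0) => v _; rewrite -z_rep.
apply: ler_of_sqr; first by rewrite mulr_ge0.
rewrite exprMn sqr_sqrtr // -mulrA.
apply: le_trans (form_CauchySchwarz ha a_sym alpha_gt0 a_coercive z v) _.
by rewrite mulrCA ler_wpM2l //; exact: form_diag_le a_bound v.
Qed.

Let na_ge0 : 0 <= na := ltW na_gt0.

Let riesz q := xget 0 [set z : V | forall v, a z v = b v q].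

Let riesz_spec q v : a (riesz q) v = b v q.
Proof.
have C_ge0 : 0 <= `|nb| * `|q| by rewrite mulr_ge0.
have b_q_bound x : `|b x q| <= `|nb| * `|q| * `|x| by rewrite mulrAC b_bound_abs.
apply: (xgetPex 0 (lax_milgram ha a_sym alpha_gt0 a_coercive na_ge0 a_bound (b_lin q)
  C_ge0 b_q_bound)).
Qed.

Let riesz_lin r x y : riesz (r *: x + y) = r *: riesz x + riesz y.
Proof.
apply: (form_inj ha alpha_gt0 a_coercive) => v.
by rewrite riesz_spec (bilinDl ha) (bilinZl ha) !riesz_spec; case: hb => _ ->.
Qed.

Let KP v : kerB b (P v).
Proof. by case: (hP v). Qed.

Lemma riesz_multiplier : exists q0, forall q, a (riesz q0) (riesz q) = g q.
Proof.
pose d q1 q2 := a (riesz q1) (riesz q2).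
have hd : is_bilinear d.
  split=> r x y z; rewrite /d riesz_lin.
    by rewrite (bilinDl ha) (bilinZl ha).
  by rewrite (bilinDr ha) (bilinZr ha).
have coef_gt0 : 0 < beta ^+ 2 / na by rewrite divr_gt0 ?exprn_gt0.
have d_coercive q : beta ^+ 2 / na * `|q| ^+ 2 <= d q q.
  rewrite mulrAC ler_pdivrMr // [leRHS]mulrC.
  exact: representative_infsup (riesz_spec q).
have riesz_le q : `|riesz q| <= `|nb| / alpha * `|q|.
  by rewrite mulrAC ler_pdivlMr // mulrC; exact: representative_norm (riesz_spec q).
have M_ge0 : 0 <= na * (`|nb| / alpha) ^+ 2 by rewrite mulr_ge0 ?sqr_ge0.
have d_bound x y : `|d x y| <= na * (`|nb| / alpha) ^+ 2 * `|x| * `|y|.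
  apply: le_trans (a_bound _ _) _.
  have -> : na * (`|nb| / alpha) ^+ 2 * `|x| * `|y|
          = na * ((`|nb| / alpha * `|x|) * (`|nb| / alpha * `|y|)) by ring.
  rewrite -mulrA ler_wpM2l //.
  exact: ler_pM (normr_ge0 _) (normr_ge0 _) (riesz_le x) (riesz_le y).
have uC_ge0 : 0 <= `|nb| * `|u| by rewrite mulr_ge0.
exact: lax_milgram hd (fun x y => a_sym _ _) coef_gt0 d_coercive M_ge0 d_bound g_lin
  uC_ge0 g_bound.
Qed.

Lemma compl_u_representative : exists q0, forall v, a (u - P u) v = b v q0.
Proof.
have [q0 q0_spec] := riesz_multiplier.
exists q0 => v; suff -> : u - P u = riesz q0 by exact: riesz_spec.
(* both sides are a-orthogonal to [kerB b] and have the same image under [B] *)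
apply/subr0_eq/(perp_mem_eq0 alpha_gt0 a_coercive (K := kerB b)) => [q|k Kk].
  by rewrite !(bilinBl hb) eq_p KP -riesz_spec a_sym q0_spec subr0 subrr.
by rewrite (bilinBl ha) (proj_compl_perp ha hP u Kk) riesz_spec Kk subrr.
Qed.

Let G := dnorm setT g.

Let G_ge0 : 0 <= G := dnorm_ge0 setT g_bound.

Lemma compl_u_form_le : beta ^+ 2 * a (u - P u) (u - P u) <= na * G ^+ 2.
Proof.
have [q0 w_rep] := compl_u_representative.
have X_ge0 := form_ge0 alpha_gt0 a_coercive (u - P u).
have Xg : a (u - P u) (u - P u) = g q0 by rewrite w_rep (bilinBl hb) eq_p (KP u) subr0.
have X_le : a (u - P u) (u - P u) <= G * `|q0|.
  by rewrite Xg; exact: le_trans (ler_norm _) (normr_le_dnorm g_bound (I : setT q0)).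
have q0_le := representative_infsup w_rep.
move: X_ge0 X_le q0_le; set X := a _ _ => X_ge0 X_le q0_le.
have [->|X_neq0] := eqVneq X 0; first by rewrite mulr0 mulr_ge0 ?sqr_ge0.
have X_gt0 : 0 < X by rewrite lt_neqAle eq_sym X_neq0.
(* square [X <= G |q0|] and use [beta^2 |q0|^2 <= na X] *)
rewrite -(ler_pM2r X_gt0); have := ler_pM X_ge0 X_ge0 X_le X_le.
have := sqr_ge0 G; nra.
Qed.

Lemma compl_u_norm : `|u - P u| <= beta^-1 * Num.sqrt (na / alpha) * G.
Proof.
have ratio_ge0 : 0 <= na / alpha by rewrite divr_ge0 // ltW.
apply: ler_of_sqr; first by rewrite !mulr_ge0 ?sqrtr_ge0 ?invr_ge0 ?(ltW beta_gt0).
have -> : (beta^-1 * Num.sqrt (na / alpha) * G) ^+ 2 = na * G ^+ 2 / (beta ^+ 2 * alpha).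
  by rewrite !exprMn sqr_sqrtr //; field; rewrite !gt_eqF.
rewrite ler_pdivlMr ?mulr_gt0 ?exprn_gt0 //; apply: le_trans compl_u_form_le.
rewrite mulrCA ler_wpM2l ?sqr_ge0 // mulrC; exact: a_coercive.
Qed.

Lemma proj_u_norm : `|P u| <= alpha0^-1 * dnorm (kerB b) f.
Proof.
have alpha0_gt0 : 0 < alpha0 by apply: lt_le_trans alpha_le.
have Fk_ge0 : 0 <= dnorm (kerB b) f := dnorm_ge0 _ f_bound.
rewrite mulrC ler_pdivlMr //.
have [->|Pu_neq0] := eqVneq (P u) 0; first by rewrite normr0 mul0r.
rewrite mulrC -(ler_pM2r (_ : 0 < `|P u|)) ?normr_gt0 // -mulrA -expr2.
have aPu : a (P u) (P u) = f (P u).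
  rewrite -eq_u (KP u) addr0; have := proj_compl_perp ha hP u (KP u).
  by rewrite (bilinBl ha); lra.
apply: le_trans (a_coercive_ker (KP u)) _; rewrite aPu.
exact: le_trans (ler_norm _) (normr_le_dnorm f_bound (KP u)).
Qed.

Lemma u_bound :
  `|u| <= alpha0^-1 * dnorm (kerB b) f + beta^-1 * Num.sqrt (na / alpha) * G.
Proof.
rewrite -[u in `|u|](subrK (P u)) addrC; apply: le_trans (ler_normD _ _) _.
exact: lerD proj_u_norm compl_u_norm.
Qed.

Lemma pressure_identity v : b v p = f (v - P v) - a (u - P u) v.
Proof.
have := eq_u v; have := eq_u (P v); rewrite (KP v) addr0.
have := proj_compl_perp ha hP u (KP v); have := proj_compl_perp ha hP v (KP u).
rewrite a_sym (linB f_lin) !(bilinBl ha) !(bilinBr ha); lra.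
Qed.

Lemma compl_u_form_bound v : `|a (u - P u) v| <= na * G / beta * `|v|.
Proof.
apply: ler_of_sqr; first by rewrite !mulr_ge0 ?invr_ge0 ?(ltW beta_gt0).
rewrite real_normK ?num_real //.
apply: le_trans (form_CauchySchwarz ha a_sym alpha_gt0 a_coercive _ _) _.
have -> : (na * G / beta * `|v|) ^+ 2 = na * G ^+ 2 / beta ^+ 2 * (na * `|v| ^+ 2).
  by rewrite !exprMn exprVn; field; rewrite gt_eqF.
apply: ler_pM; rewrite ?(form_ge0 alpha_gt0 a_coercive) ?(form_diag_le a_bound) //.
by rewrite ler_pdivlMr ?exprn_gt0 // mulrC compl_u_form_le.
Qed.

Let compl_norm v : `|v - P v| <= Num.sqrt (na / alpha) * `|v|.
Proof. exact: proj_compl_norm ha a_sym alpha_gt0 a_coercive na_ge0 a_bound hP v. Qed.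

Let fP_bound v :
  `|f (v - P v)| <= (na * `|u| + `|nb| * `|p|) * Num.sqrt (na / alpha) * `|v|.
Proof.
apply: le_trans (f_bound _) _; rewrite -mulrA ler_wpM2l ?compl_norm //.
by rewrite addr_ge0 ?mulr_ge0.
Qed.

Lemma p_bound :
  `|p| <= beta^-1 * dnorm setT (fun v => f (v - P v)) + na / beta ^+ 2 * G.
Proof.
set Fp := dnorm setT _; have Fp_ge0 : 0 <= Fp := dnorm_ge0 _ fP_bound.
have [->|p_neq0] := eqVneq p 0.
  by rewrite normr0 addr_ge0 ?mulr_ge0 ?invr_ge0 ?sqr_ge0 ?na_ge0 ?G_ge0 ?(ltW beta_gt0).
have k_ge0 : 0 <= Fp + na * G / beta.
  by rewrite addr_ge0 ?mulr_ge0 ?invr_ge0 ?na_ge0 ?G_ge0 ?(ltW beta_gt0).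
rewrite -(ler_pM2l beta_gt0).
have -> : beta * (beta^-1 * Fp + na / beta ^+ 2 * G) = Fp + na * G / beta.
  by field; rewrite gt_eqF.
apply: infsup_le p_neq0 k_ge0 _ (infsup p_neq0) => v _.
rewrite pressure_identity mulrDl; apply: le_trans (ler_norm _) _.
apply: le_trans (ler_normB _ _) (lerD _ (compl_u_form_bound v)).
exact: normr_le_dnorm fP_bound (I : setT v).
Qed.

Lemma f_compl_dnorm_le : dnorm setT (fun v => f (v - P v))
  <= Num.sqrt (na / alpha) * dnorm (a_perp a (kerB b)) f.
Proof.
have Fperp_ge0 := dnorm_ge0 (a_perp a (kerB b)) f_bound.
apply: ge_dnorm => [|v _ _]; first by rewrite mulr_ge0 ?sqrtr_ge0.
apply: le_trans (normr_le_dnorm f_bound (proj_compl_perp ha hP v)) _.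
by rewrite [leRHS]mulrAC [leLHS]mulrC ler_wpM2r // compl_norm.
Qed.

Lemma mixed_bounds :
  [/\ `|u| <= alpha0^-1 * dnorm (kerB b) f + beta^-1 * Num.sqrt (na / alpha) * G,
      `|p| <= beta^-1 * dnorm setT (fun v => f (v - P v)) + na / beta ^+ 2 * G
    & beta^-1 * dnorm setT (fun v => f (v - P v)) + na / beta ^+ 2 * G
      <= beta^-1 * Num.sqrt (na / alpha) * dnorm (a_perp a (kerB b)) f
         + na / beta ^+ 2 * G].
Proof.
split; [exact: u_bound | exact: p_bound |].
by rewrite lerD2r -mulrA ler_wpM2l ?invr_ge0 ?(ltW beta_gt0) //; exact: f_compl_dnorm_le.
Qed.

End MixedProblem.

Theorem theorem2p4 (R : realType) (V Q : completeNormedModType R)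
  (f : V -> R) (g : Q -> R) (a : V -> V -> R) (b : V -> Q -> R)
  (na nb alpha alpha0 beta : R) (u : V) (p : Q) (P : V -> V) :
  is_hilbert V -> is_hilbert Q ->
  is_dual_elem f -> is_dual_elem g ->
  is_bilinear a -> is_bilinear b ->
  (forall x y, `|a x y| <= na * `|x| * `|y|) ->
  (forall v q, `|b v q| <= nb * `|v| * `|q|) ->
  (* Range B = Q' *)
  (forall h : Q -> R, is_dual_elem h -> exists v, forall q, b v q = h q) ->
  0 < beta ->
  (* beta <= inf_{q <> 0} sup_{v <> 0} b(v,q) / (||v|| ||q||) *)
  (forall q : Q, q != 0 ->
     beta <= sup [set b v q / (`|v| * `|q|) | v in [set v : V | v != 0]]) ->
  (forall x y, a x y = a y x) ->
  0 < alpha -> (forall x, alpha * `|x| ^+ 2 <= a x x) ->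
  alpha <= alpha0 -> (forall x, kerB b x -> alpha0 * `|x| ^+ 2 <= a x x) ->
  (forall v, a u v + b v p = f v) ->
  (forall q, b u q = g q) ->
  is_a_proj a (kerB b) P ->
  [/\ `|u| <= alpha0^-1 * dnorm (kerB b) f
              + beta^-1 * Num.sqrt (na / alpha) * dnorm setT g,
      `|p| <= beta^-1 * dnorm setT (fun v => f (v - P v))
              + na / beta ^+ 2 * dnorm setT g
    & beta^-1 * dnorm setT (fun v => f (v - P v)) + na / beta ^+ 2 * dnorm setT g
      <= beta^-1 * Num.sqrt (na / alpha) * dnorm (a_perp a (kerB b)) f
         + na / beta ^+ 2 * dnorm setT g].
Proof.
move=> _ _ [f_lin _] [g_lin _] ha hb a_bound b_bound _ beta_gt0 infsup a_sym
  alpha_gt0 a_coercive alpha_le a_coercive_ker eq_u eq_p hP.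
have [[x x_neq0]|V_triv] := pselect (exists x : V, x != 0).
  have na_gt0 := lt_le_trans alpha_gt0 (coercive_le_bound a_coercive a_bound x_neq0).
  exact: mixed_bounds.
have V0 (v : V) : v = 0 by apply/eqP/negPn/negP => v_neq0; apply: V_triv; exists v.
have Q0 := infsup_trivial beta_gt0 V0 infsup.
by rewrite !dnorm_trivial // (V0 u) (Q0 p) !normr0 !mulr0 !addr0.
Qed.
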